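(* Let $R$ be an integral domain which is a Hilbert ring. Then every maximal ideal of $R[X]$ is power stable. In particular, for a field $K$, every maximal ideal $M$ of $K[X_1,\dots,X_n]$ satisfies $M^t\cap K[X_1,\dots,X_{n-1}] = (M\cap K[X_1,\dots,X_{n-1}])^t$ for all $t\geq 1$.
   Context: A ring is a Hilbert ring if every prime ideal is an intersection of maximal ideals. An ideal $I$ of the polynomial ring $R[X]$ over an integral domain $R$ is called power stable if $I^t\cap R = (I\cap R)^t$ for all integers $t\geq 1$. *)

From HB Require Import structures.
From mathcomp Require Import all_boot all_order all_algebra.
Set Implicit Arguments. Unset Strict Implicit. Unset Printing Implicit Defensive.
Import GRing.Theory.
Local Open Scope ring_scope.

Section Ideals.
Variable R : comNzRingType.

Definition is_ideal (I : R -> Prop) : Prop :=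
  [/\ I 0, (forall x y, I x -> I y -> I (x + y)) & (forall a x, I x -> I (a * x))].

Definition proper_ideal (I : R -> Prop) : Prop := is_ideal I /\ ~ I 1.

Definition prime_ideal (P : R -> Prop) : Prop :=
  proper_ideal P /\ (forall a b, P (a * b) -> P a \/ P b).

Definition maximal_ideal (M : R -> Prop) : Prop :=
  proper_ideal M /\
  (forall J : R -> Prop, is_ideal J -> (forall x, M x -> J x) ->
     (forall x, J x <-> M x) \/ (forall x, J x)).

Definition hilbert_ring : Prop :=
  forall P : R -> Prop, prime_ideal P ->
    forall x, P x <-> (forall M, maximal_ideal M -> (forall y, P y -> M y) -> M x).

Definition ideal_mul (I J : R -> Prop) : R -> Prop := fun x =>
  exists s : seq (R * R), (forall p, p \in s -> I p.1 /\ J p.2) /\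
     x = \sum_(p <- s) p.1 * p.2.

Fixpoint ideal_pow (I : R -> Prop) (t : nat) : R -> Prop :=
  match t with
  | O => fun _ => True
  | S t' => ideal_mul (ideal_pow I t') I
  end.

End Ideals.

Definition contract (R : comNzRingType) (I : {poly R} -> Prop) : R -> Prop :=
  fun r => I r%:P.

(* iterated polynomial ring K[X_1,...,X_n] = (K[X_1..X_{n-1}])[X_n] *)
Fixpoint mpoly (K : idomainType) (n : nat) : idomainType :=
  match n with
  | O => K
  | S m => ({poly (mpoly K m)} : idomainType)
  end.

From HB Require Import structures.
From mathcomp Require Import all_boot all_order all_algebra.
From mathcomp Require Import ring.
From Stdlib Require Import Classical Wf_nat.
Set Implicit Arguments. Unset Strict Implicit. Unset Printing Implicit Defensive.
Import GRing.Theory.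
Local Open Scope ring_scope.

(* Let MM be a maximal ideal of R[X] and m = MM ∩ R its contraction.
   - If R is a Hilbert ring, m is maximal (contract_maximal).  Otherwise MM
     contains a polynomial g whose leading coefficient lies outside m, some
     maximal N above m avoids that coefficient, and MM + N[X] would be the
     whole ring, which the determinant trick (det_trick) rules out.
   - If m is maximal, (R/m)[X] is a principal ideal domain, so MM = m[X] + (f)
     for a monic f of positive degree (monic_generator).  Hence
     MM^t ⊆ m^t[X] + (f), and division by f shows that the constants of
     m^t[X] + (f) lie in m^t (power_stable).
   - For K[X_1,...,X_n] we show that polynomial rings over Hilbert rings are
     Hilbert rings (hilbert_poly), using the determinant trick again and the
     existence of maximal ideals N[X] + (pi) above proper ideals containing
     N[X] (maximal_above). *)

Lemma least_nat (P : nat -> Prop) :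
  (exists n, P n) -> exists n, P n /\ forall m, P m -> (n <= m)%N.
Proof.
move=> exP.
have [n [[Pn n_min] _]] :=
  dec_inh_nat_subset_has_unique_least_element P (fun n => classic (P n)) exP.
by exists n; split=> // m Pm; apply/leP/n_min.
Qed.

Section Ideals.
Variable R : comNzRingType.
Implicit Types (I J K M N P : R -> Prop) (a b c x y : R).

Lemma ideal0 I : is_ideal I -> I 0. Proof. by case. Qed.

Lemma idealD I x y : is_ideal I -> I x -> I y -> I (x + y).
Proof. by case=> _ + _; apply. Qed.

Lemma idealM I a x : is_ideal I -> I x -> I (a * x).
Proof. by case=> _ _; apply. Qed.

Lemma idealMr I a x : is_ideal I -> I x -> I (x * a).
Proof. by move=> hI Ix; rewrite mulrC; apply: idealM. Qed.

Lemma idealN I x : is_ideal I -> I x -> I (- x).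
Proof. by move=> hI Ix; rewrite -mulN1r; apply: idealM. Qed.

Lemma idealB I x y : is_ideal I -> I x -> I y -> I (x - y).
Proof. by move=> hI Ix Iy; apply: idealD => //; apply: idealN. Qed.

Lemma ideal_sum I (T : Type) (s : seq T) (Q : pred T) (F : T -> R) :
  is_ideal I -> (forall i, Q i -> I (F i)) -> I (\sum_(i <- s | Q i) F i).
Proof.
move=> hI IF; apply: (big_rec (fun x => I x)); first exact: ideal0.
by move=> i x Qi Ix; apply: idealD => //; apply: IF.
Qed.

Lemma ideal1 I : is_ideal I -> I 1 -> forall x, I x.
Proof. by move=> hI I1 x; rewrite -(mulr1 x); apply: idealM. Qed.

Lemma ideal_ext I J : (forall x, I x <-> J x) -> is_ideal I -> is_ideal J.
Proof.
move=> IJ [I0 ID IM]; split; first exact/IJ.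
- by move=> x y /IJ Ix /IJ Iy; apply/IJ/ID.
- by move=> a x /IJ Ix; apply/IJ/IM.
Qed.

Lemma prime_expr P a n : prime_ideal P -> P (a ^+ n) -> P a.
Proof.
move=> [[_ P1] Pmul]; elim: n => [|n IHn]; first by rewrite expr0.
by rewrite exprS => /Pmul [] // /IHn.
Qed.

Definition ideal_add I J : R -> Prop :=
  fun x => exists a b, [/\ I a, J b & x = a + b].

Definition principal (p : R) : R -> Prop := fun x => exists c, x = c * p.

Lemma principal_ideal p : is_ideal (principal p).
Proof.
split; first by exists 0; rewrite mul0r.
- by move=> _ _ [c ->] [d ->]; exists (c + d); rewrite mulrDl.
- by move=> a _ [c ->]; exists (a * c); rewrite mulrA.
Qed.

Lemma principal_gen p : principal p p.
Proof. by exists 1; rewrite mul1r. Qed.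

Lemma principal_sub I p : is_ideal I -> I p -> forall x, principal p x -> I x.
Proof. by move=> hI Ip _ [c ->]; apply: idealM. Qed.

Lemma ideal_add_ideal I J : is_ideal I -> is_ideal J -> is_ideal (ideal_add I J).
Proof.
move=> hI hJ; split; first by exists 0, 0; rewrite addr0; split=> //; apply: ideal0.
- move=> _ _ [a [b [Ia Jb ->]]] [a' [b' [Ia' Jb' ->]]].
  by exists (a + a'), (b + b'); split; [apply: idealD | apply: idealD | rewrite addrACA].
- move=> c _ [a [b [Ia Jb ->]]].
  by exists (c * a), (c * b); split; [apply: idealM | apply: idealM | rewrite mulrDr].
Qed.

Lemma ideal_addl I J x : is_ideal J -> I x -> ideal_add I J x.
Proof. by move=> hJ Ix; exists x, 0; split=> //; [apply: ideal0 | rewrite addr0]. Qed.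

Lemma ideal_addr I J x : is_ideal I -> J x -> ideal_add I J x.
Proof. by move=> hI Jx; exists 0, x; split=> //; [apply: ideal0 | rewrite add0r]. Qed.

Lemma ideal_add_sub I J K : is_ideal K ->
  (forall x, I x -> K x) -> (forall x, J x -> K x) -> forall x, ideal_add I J x -> K x.
Proof. by move=> hK IK JK _ [a [b [Ia Jb ->]]]; apply: idealD => //; [apply: IK | apply: JK]. Qed.

Lemma maximal_sub M J x : maximal_ideal M -> is_ideal J ->
  (forall y, M y -> J y) -> J x -> ~ M x -> J 1.
Proof. by move=> [_ Mmax] hJ MJ Jx Mx; case: (Mmax J hJ MJ) => [/(_ x) [/(_ Jx)] |]. Qed.

Lemma maximal_intro M : is_ideal M -> ~ M 1 ->
  (forall J, is_ideal J -> (forall y, M y -> J y) -> ~ J 1 -> forall y, J y -> M y) ->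
  maximal_ideal M.
Proof.
move=> hM M1 Mmax; split=> // J hJ MJ.
case: (classic (J 1)) => [J1 | J1]; first by right; apply: ideal1.
by left=> y; split; [apply: Mmax | apply: MJ].
Qed.

Lemma maximal_inverse M c : maximal_ideal M -> ~ M c ->
  exists b z, M z /\ b * c + z = 1.
Proof.
move=> hM Mc; have [[hMi _] _] := hM.
have [z [_ [Mz [b ->] E]]] : ideal_add M (principal c) 1.
  apply: (maximal_sub (x := c) hM (ideal_add_ideal hMi (principal_ideal c))) => //.
  - by move=> y; apply: ideal_addl; apply: principal_ideal.
  - exact/ideal_addr/principal_gen.
by exists b, z; rewrite addrC.
Qed.

Lemma maximal_prime M : maximal_ideal M -> prime_ideal M.
Proof.
move=> hM; have [[hMi M1] _] := hM; split=> // a b Mab.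
case: (classic (M a)) => Ma; [by left | right].
have [d [z [Mz E]]] := maximal_inverse hM Ma.
have -> : b = d * (a * b) + z * b by rewrite mulrA -mulrDl E mul1r.
by apply: (idealD hMi); [apply: idealM | apply: idealMr].
Qed.

Lemma maximal_ext M M' : (forall x, M x <-> M' x) -> maximal_ideal M -> maximal_ideal M'.
Proof.
move=> MM' [[hM M1] Mmax]; split; first by split; [apply: ideal_ext hM | move/MM'].
move=> J hJ M'J; have [MJ | ] := Mmax J hJ (fun x Mx => M'J x (proj1 (MM' x) Mx)).
  by left=> x; rewrite MJ.
by right.
Qed.

Lemma hilbert_avoid P c : hilbert_ring R -> prime_ideal P -> ~ P c ->
  exists N, [/\ maximal_ideal N, forall x, P x -> N x & ~ N c].
Proof.
move=> hR hP Pc; apply: NNPP => noN; apply/Pc/(hR P hP) => N hN PN.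
by apply: NNPP => Nc; apply: noN; exists N.
Qed.

Lemma ideal_mul_ideal I J : is_ideal I -> is_ideal (ideal_mul I J).
Proof.
move=> hI; split; first by exists [::]; rewrite big_nil.
- move=> _ _ [s [Hs ->]] [s' [Hs' ->]]; exists (s ++ s'); split; last by rewrite big_cat.
  by move=> p; rewrite mem_cat => /orP[/Hs | /Hs'].
- move=> a _ [s [Hs ->]]; exists [seq (a * p.1, p.2) | p <- s]; split.
    by move=> _ /mapP[p ps ->]; have [Ip Jp] := Hs p ps; split=> //; apply: idealM.
  by rewrite big_map mulr_sumr; apply: eq_bigr => p _; rewrite mulrA.
Qed.

Lemma ideal_mul_mul I J a b : I a -> J b -> ideal_mul I J (a * b).
Proof.
move=> Ia Jb; exists [:: (a, b)]; split; last by rewrite big_seq1.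
by move=> p; rewrite inE => /eqP ->.
Qed.

Lemma ideal_pow_ideal I t : is_ideal I -> is_ideal (ideal_pow I t).
Proof. by move=> hI; elim: t => [|t IHt] /=; [split | apply: ideal_mul_ideal]. Qed.

End Ideals.

Section ExtendedIdeals.
Variable R : comNzRingType.
Implicit Types (I J N P : R -> Prop) (a b c : R).
Implicit Types (JJ MM : {poly R} -> Prop) (p q g l r u v w : {poly R}).

Definition coefs_in I p := forall i, I p`_i.

Lemma coefs_in_ideal I : is_ideal I -> is_ideal (coefs_in I).
Proof.
move=> hI; split.
- by move=> i; rewrite coef0; apply: ideal0.
- by move=> p q Ip Iq i; rewrite coefD; apply: idealD.
- by move=> p q Iq i; rewrite coefM; apply: (ideal_sum _ hI) => j _; apply: (idealM _ hI).
Qed.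

Lemma coefs_inC I a : is_ideal I -> I a -> coefs_in I a%:P.
Proof. by move=> hI Ia i; rewrite coefC; case: eqP => // _; apply: ideal0. Qed.

Lemma coefs_in_mul I J p q : is_ideal I ->
  coefs_in I p -> coefs_in J q -> coefs_in (ideal_mul I J) (p * q).
Proof.
move=> hI Ip Jq i; rewrite coefM; apply: (ideal_sum _ (ideal_mul_ideal J hI)) => j _.
exact: ideal_mul_mul.
Qed.

Lemma contract_ideal JJ : is_ideal JJ -> is_ideal (contract JJ).
Proof.
move=> hJ; rewrite /contract; split.
- by rewrite polyC0; apply: ideal0.
- by move=> a b Ja Jb; rewrite polyCD; apply: idealD.
- by move=> a b Jb; rewrite polyCM; apply: idealM.
Qed.

Lemma contract_prime JJ : prime_ideal JJ -> prime_ideal (contract JJ).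
Proof.
move=> [[hJ J1] Jmul]; split; first by split; [apply: contract_ideal | rewrite /contract polyC1].
by move=> a b; rewrite /contract polyCM => /Jmul.
Qed.

Lemma coefs_in_contract JJ p : is_ideal JJ -> coefs_in (contract JJ) p -> JJ p.
Proof.
move=> hJ Jp; rewrite -[p]coefK poly_def; apply: (ideal_sum _ hJ) => i _.
by rewrite -mul_polyC; apply: (idealMr _ hJ (Jp i)).
Qed.

(* [top_at I p j]: j is the largest index of a coefficient of p outside I,
   i.e. the degree of the image of p in (R/I)[X]. *)
Definition top_at I p j := ~ I p`_j /\ forall k, (j < k)%N -> I p`_k.

Lemma top_at_exists I p : is_ideal I -> ~ coefs_in I p -> exists j, top_at I p j.
Proof.
move=> hI Ip.
have high : forall k, (size p <= k)%N -> I p`_k.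
  by move=> k pk; rewrite nth_default //; apply: ideal0.
have [[|j] [j_high j_min]] :=
  least_nat (ex_intro (fun n => forall k, (n <= k)%N -> I p`_k) _ high).
  by case: Ip => i; apply: j_high.
exists j; split=> // Ij.
suff /j_min : forall k, (j <= k)%N -> I p`_k by rewrite ltnn.
by move=> k; rewrite leq_eqVlt => /predU1P [<- | /j_high].
Qed.

Lemma top_at_unique I p j j' : top_at I p j -> top_at I p j' -> j = j'.
Proof. by move=> [Ij Hj] [Ij' Hj']; case: (ltngtP j j') => // [/Hj | /Hj']. Qed.

Lemma top_at_size I p j : is_ideal I -> top_at I p j -> (j < size p)%N.
Proof.
move=> hI [Ij _]; rewrite ltnNge; apply/negP => /leq_sizeP/(_ j (leqnn j)) pj0.
by apply: Ij; rewrite pj0; apply: ideal0.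
Qed.

Lemma lead_out_size I p : is_ideal I -> ~ I (lead_coef p) -> (0 < size p)%N.
Proof.
move=> hI Ip; rewrite lt0n size_poly_eq0.
by apply: contra_not_neq Ip => ->; rewrite lead_coef0; apply: ideal0.
Qed.

Lemma top_at_lead I p : is_ideal I -> ~ I (lead_coef p) -> top_at I p (size p).-1.
Proof.
move=> hI Ilead; split=> // k lt_k; rewrite nth_default; first exact: ideal0.
by case: (size p) lt_k.
Qed.

Lemma top_at_addr I p q j : is_ideal I -> top_at I p j -> coefs_in I q -> top_at I (p + q) j.
Proof.
move=> hI [Ij Hj] Iq; split=> [Ipq | k lt_jk].
  by apply: Ij; rewrite -(addrK q`_j p`_j) -coefD; apply: idealB.
by rewrite coefD; apply: (idealD hI (Hj _ lt_jk)).
Qed.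

Lemma top_at_scale P a p j : prime_ideal P -> ~ P a -> top_at P p j -> top_at P (a *: p) j.
Proof.
move=> [[hP _] Pmul] Pa [Pj Phigh]; split=> [|k /Phigh Pk]; rewrite coefZ; last exact: idealM.
by case/Pmul.
Qed.

Lemma coefM_top I u v (j l : nat) : is_ideal I ->
  (forall k, (j < k)%N -> I u`_k) -> (forall k, (l < k)%N -> I v`_k) ->
  I ((u * v)`_(j + l) - u`_j * v`_l) /\ forall k, (j + l < k)%N -> I (u * v)`_k.
Proof.
move=> hI Iu Iv; have term : forall k (i : 'I_k.+1), (j + l <= k)%N -> i != j :> nat ->
    I (u`_i * v`_(k - i)).
  move=> k i le_k ne_ij; case: (ltnP j i) => [/Iu Iui | le_ij]; first exact: (idealMr _ hI Iui).
  apply: (idealM _ hI); apply: Iv; rewrite ltn_subRL (leq_trans _ le_k) // ltn_add2r.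
  by rewrite ltn_neqAle ne_ij le_ij.
split; last first.
  move=> k lt_k; rewrite coefM; apply: (ideal_sum _ hI) => i _.
  case: (eqVneq (i : nat) j) => [eq_ij | ]; last by apply: term; apply: ltnW.
  by apply: (idealM _ hI); apply: Iv; rewrite eq_ij ltn_subRL.
rewrite coefM (bigD1 (@Ordinal (j + l).+1 j (leq_addr l j))) //= addKn.
by rewrite addrAC subrr add0r; apply: (ideal_sum _ hI) => i ne_ij; apply: term.
Qed.

Lemma top_at_mul P u v (j l : nat) : prime_ideal P ->
  top_at P u j -> top_at P v l -> top_at P (u * v) (j + l).
Proof.
move=> [[hP _] Pmul] [Pu Hu] [Pv Hv]; have [Ptop Phigh] := coefM_top hP Hu Hv.
split=> // Puv; suff /Pmul [] : P (u`_j * v`_l) by [].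
have -> : u`_j * v`_l = (u * v)`_(j + l) - ((u * v)`_(j + l) - u`_j * v`_l).
  by rewrite opprB addrC subrK.
exact: idealB.
Qed.

Lemma truncate_top I JJ p j : is_ideal I -> is_ideal JJ -> (forall a, I a -> JJ a%:P) ->
  JJ p -> top_at I p j -> exists g, [/\ JJ g, size g = j.+1 & lead_coef g = p`_j].
Proof.
move=> hI hJ IJ Jp [Ij Ihigh].
have pj0 : p`_j != 0 by apply: contra_not_neq Ij => ->; apply: ideal0.
pose g := \poly_(i < j.+1) p`_i.
have sg : size g = j.+1 by rewrite size_poly_eq.
exists g; split=> //; last by rewrite lead_coefE sg coef_poly ltnSn.
have -> : g = p - (p - g) by rewrite opprB addrC subrK.
apply: idealB => //; rewrite -[p - g]coefK poly_def; apply: (ideal_sum _ hJ) => i _.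
rewrite -mul_polyC; apply: (idealMr _ hJ); apply: IJ.
rewrite coefB coef_poly ltnS; case: leqP => [_ | /Ihigh]; last by rewrite subr0.
by rewrite subrr; apply: ideal0.
Qed.

End ExtendedIdeals.

Section Division.
Variable R : comNzRingType.
Implicit Types (I N : R -> Prop) (a c : R).
Implicit Types (JJ : {poly R} -> Prop) (p q f g l r w : {poly R}).

Lemma pseudo_div_step g p (e d : nat) : size g = e.+1 -> size p = d.+1 -> (e <= d)%N ->
  (size (lead_coef g *: p - (p`_d *: 'X^(d - e)) * g)%R <= d)%N.
Proof.
move=> sg sp le_ed; apply/leq_sizeP => m le_dm.
rewrite coefB coefZ -scalerAl coefZ coefXnM ltnNge (leq_trans (leq_subr _ _) le_dm) /=.
case: (ltngtP d m) le_dm => // [lt_dm | <-] _; last first.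
  by rewrite subKn // lead_coefE sg mulrC subrr.
rewrite (nth_default _ (_ : size p <= m)%N) ?sp // mulr0.
rewrite (nth_default _ (_ : size g <= m - (d - e))%N) ?mulr0 ?subrr // sg.
by rewrite leq_subRL ?addnS ?subnK // (leq_trans (leq_subr e d)) // ltnW.
Qed.

Lemma pseudo_div I g p : is_ideal I -> (0 < size g)%N -> coefs_in I p ->
  exists k r w, [/\ (size r < size g)%N, coefs_in I r & lead_coef g ^+ k *: p = r + w * g].
Proof.
move=> hI; case sg: (size g) => [//|e] _; set c := lead_coef g.
have hIX := coefs_in_ideal hI.
have [n sp] : exists n, (size p <= n + e)%N by exists (size p); rewrite leq_addr.
elim: n p sp => [|n IHn] p sp Ip.
  by exists 0%N, p, 0; split; rewrite ?ltnS // expr0 scale1r mul0r addr0.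
case: (leqP (size p) e) => [small | big].
  by apply: IHn => //; rewrite (leq_trans small) ?leq_addl.
have [d sp'] : exists d, size p = d.+1.
  by exists (size p).-1; rewrite prednK // (leq_ltn_trans _ big).
have le_ed : (e <= d)%N by rewrite -ltnS -sp'.
set m := (p`_d *: 'X^(d - e)) * g.
have Im : coefs_in I m by move=> i; rewrite /m -scalerAl coefZ; apply: (idealMr _ hI).
have s_pm : (size (c *: p - m)%R <= n + e)%N.
  by rewrite (leq_trans (pseudo_div_step sg sp' le_ed)) // -ltnS -sp' -addSn.
have I_pm : coefs_in I (c *: p - m).
  by apply: (idealB hIX) => //; rewrite -mul_polyC; apply: (idealM _ hIX).
have [k [r [w [sr Ir E]]]] := IHn _ s_pm I_pm.
exists k.+1, r, (w + c ^+ k *: (p`_d *: 'X^(d - e))); split=> //.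
by rewrite exprSr -scalerA -(subrK m (c *: p)) scalerDr E /m scalerAl mulrDl addrA.
Qed.

Lemma monic_div I f p : is_ideal I -> f \is monic -> coefs_in I p ->
  exists r w, [/\ (size r < size f)%N, coefs_in I r & p = r + w * f].
Proof.
move=> hI mf Ip; have sf : (0 < size f)%N by rewrite size_poly_gt0 monic_neq0.
have [k [r [w [sr Ir]]]] := pseudo_div hI sf Ip.
by rewrite (monicP mf) expr1n scale1r => E; exists r, w.
Qed.

Definition least_lead I JJ l := [/\ JJ l, ~ I (lead_coef l) &
  forall l', JJ l' -> ~ I (lead_coef l') -> (size l <= size l')%N].

Section LeastLead.
Variables (I : R -> Prop) (JJ : {poly R} -> Prop).
Hypotheses (hI : is_ideal I) (hJ : is_ideal JJ) (IJ : forall a, I a -> JJ a%:P).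

Lemma least_lead_exists : (exists q, JJ q /\ ~ coefs_in I q) -> exists l, least_lead I JJ l.
Proof.
move=> [q [Jq Iq]]; have [j topq] := top_at_exists hI Iq.
have [g [Jg _ lg]] := truncate_top hI hJ IJ Jq topq.
have Ig : ~ I (lead_coef g) by rewrite lg; case: topq.
have [s [[l [Jl Il <-]] l_min]] := least_nat (P := fun s =>
  exists l, [/\ JJ l, ~ I (lead_coef l) & size l = s])
  (ex_intro _ _ (ex_intro _ g (And3 Jg Ig erefl))).
by exists l; split=> // l' Jl' Il'; apply: l_min; exists l'.
Qed.

Lemma least_lead_small l r : least_lead I JJ l -> JJ r -> (size r < size l)%N -> coefs_in I r.
Proof.
move=> [_ _ l_min] Jr sr; apply: NNPP => Ir.
have [j top_r] := top_at_exists hI Ir.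
have [g [Jg sg lg]] := truncate_top hI hJ IJ Jr top_r.
have Ig : ~ I (lead_coef g) by rewrite lg; case: top_r.
have le_lr : (size l <= size r)%N.
  by rewrite (leq_trans (l_min g Jg Ig)) // sg (top_at_size hI top_r).
by have := leq_ltn_trans le_lr sr; rewrite ltnn.
Qed.

Lemma least_lead_div l p : least_lead I JJ l -> JJ p ->
  exists k r w, [/\ (size r < size l)%N, coefs_in I r & lead_coef l ^+ k *: p = r + w * l].
Proof.
move=> least_l Jp; have [Jl Il _] := least_l.
have sl := lead_out_size hI Il.
have hT : is_ideal (fun _ : R => True) by [].
have [k [r [w [sr _ E]]]] := pseudo_div (p := p) hT sl (fun _ => Logic.I).
exists k, r, w; split=> //; apply: (least_lead_small least_l) => //.
have -> : r = lead_coef l ^+ k *: p - w * l by rewrite E addrK.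
by apply: (idealB hJ); [rewrite -mul_polyC; apply: (idealM _ hJ) | apply: (idealM _ hJ)].
Qed.

End LeastLead.

End Division.

Section ModuloMaximal.
Variable R : comNzRingType.
Implicit Types (I N P : R -> Prop) (a b c : R).
Implicit Types (JJ LL : {poly R} -> Prop) (p q f g h n y z pi mu : {poly R}).

Definition ext_gen I f : {poly R} -> Prop := ideal_add (coefs_in I) (principal f).

Lemma ext_gen_ideal I f : is_ideal I -> is_ideal (ext_gen I f).
Proof. by move=> hI; apply: ideal_add_ideal; [apply: coefs_in_ideal | apply: principal_ideal]. Qed.

Lemma ext_gen_self I f : is_ideal I -> ext_gen I f f.
Proof. by move=> hI; apply: ideal_addr; [apply: coefs_in_ideal | apply: principal_gen]. Qed.

Lemma ext_gen_sub I f g : is_ideal I -> ext_gen I g f -> forall q, ext_gen I f q -> ext_gen I g q.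
Proof.
move=> hI gf; apply: ideal_add_sub; first exact: ext_gen_ideal.
  by move=> q Iq; apply: ideal_addl => //; apply: principal_ideal.
by apply: principal_sub => //; apply: ext_gen_ideal.
Qed.

Lemma monic_size1 f : f \is monic -> (size f <= 1)%N -> f = 1.
Proof.
move=> mf sf; have sf1 : size f = 1%N.
  by apply/eqP; rewrite eqn_leq sf size_poly_gt0 monic_neq0.
by rewrite (size1_polyC sf) -polyC1; congr _%:P; move/monicP: mf; rewrite lead_coefE sf1.
Qed.

Lemma ext_gen_unit N g : prime_ideal N -> ext_gen N g 1 -> top_at N g 0.
Proof.
move=> hNp [n [_ [Nn [y ->] E]]]; have [[hN N1] _] := hNp; have hNX := coefs_in_ideal hN.
have top1 : top_at N (y * g) 0.
  have -> : y * g = 1 - n by rewrite E addrAC subrr add0r.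
  apply: (top_at_addr hN); last exact: (idealN hNX).
  split=> [|k k_gt0]; rewrite coef1 ?(gtn_eqF k_gt0) //; exact: ideal0.
have [i topy] : exists i, top_at N y i.
  by apply: (top_at_exists hN) => Ny; apply: top1.1; apply: (idealMr _ hNX Ny).
have [j topg] : exists j, top_at N g j.
  by apply: (top_at_exists hN) => Ng; apply: top1.1; apply: (idealM _ hNX Ng).
have /eqP := top_at_unique (top_at_mul hNp topy topg) top1.
by rewrite addn_eq0 => /andP [_ /eqP j0]; rewrite -j0.
Qed.

Lemma monic_top N f : is_ideal N -> ~ N 1 -> f \is monic -> top_at N f (size f).-1.
Proof. by move=> hN N1 mf; apply: top_at_lead; rewrite ?(monicP mf). Qed.

Lemma monic_congr N pi mu : prime_ideal N -> pi \is monic -> mu \is monic ->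
  (size pi <= size mu)%N -> ext_gen N mu pi -> coefs_in N (mu - pi).
Proof.
move=> hNp mpi mmu le_pi_mu [n [_ [Nn [z ->] E]]]; have [[hN N1] _] := hNp.
have hNX := coefs_in_ideal hN; set d := (size mu).-1.
have zmu : z * mu = pi - n by rewrite E addrAC subrr add0r.
have top_zmu : top_at N (z * mu) (size pi).-1.
  by rewrite zmu; apply: (top_at_addr hN); [apply: monic_top | apply: (idealN hNX)].
have [i top_z] : exists i, top_at N z i.
  by apply: (top_at_exists hN) => Nz; apply: top_zmu.1; apply: (idealMr _ hNX Nz).
have top_eq := top_at_unique (top_at_mul hNp top_z (monic_top hN N1 mmu)) top_zmu.
have le_d : ((size pi).-1 <= d)%N by rewrite /d -!subn1 leq_sub2r.
have i0 : i = 0%N by apply/eqP; rewrite -leqn0 -(leq_add2r d) top_eq.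
have d_eq : (size pi).-1 = d by rewrite -top_eq i0.
have z0 : N (1 - z`_0).
  have [+ _] := coefM_top hN top_z.2 (monic_top hN N1 mmu).2; rewrite i0 add0n.
  rewrite zmu coefB -lead_coefE (monicP mmu) mulr1 -/d -d_eq -lead_coefE (monicP mpi).
  move=> Nd; rewrite -(subrK n`_(size pi).-1 (1 - z`_0)) (addrAC 1).
  exact: (idealD hN Nd).
have -> : mu - pi = (1 - z) * mu - n by rewrite E mulrBl mul1r opprD addrA addrAC.
apply: (idealB hNX) => //; apply: (idealMr _ hNX) => k.
by case: k => [|k]; rewrite coefB coef1 //= sub0r; apply: (idealN hN); apply: top_z.2; rewrite i0.
Qed.

Lemma monic_of_lead N JJ g : maximal_ideal N -> is_ideal JJ -> (forall a, N a -> JJ a%:P) ->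
  JJ g -> ~ N (lead_coef g) -> exists f, [/\ f \is monic, JJ f & size f = size g].
Proof.
move=> hN hJ NJ Jg Ng; have [[hNi _] _] := hN.
have [b [z [Nz E]]] := maximal_inverse hN Ng.
have [d sg] : exists d, size g = d.+1.
  by exists (size g).-1; rewrite prednK // (lead_out_size hNi Ng).
pose f := b *: g + z *: 'X^d.
have fd : f`_d = 1 by rewrite coefD !coefZ coefXn eqxx mulr1 -E lead_coefE sg.
have sf : size f = d.+1.
  apply/eqP; rewrite eqn_leq; apply/andP; split.
    rewrite (leq_trans (size_polyD _ _)) // geq_max.
    by rewrite !(leq_trans (size_scale_leq _ _)) // ?sg ?size_polyXn.
  by rewrite ltnNge; apply/negP => /leq_sizeP/(_ d (leqnn d)); rewrite fd; apply/eqP/oner_neq0.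
exists f; split; [by apply/monicP; rewrite lead_coefE sf | | by rewrite sf].
apply: (idealD hJ); rewrite -mul_polyC; first exact: (idealM _ hJ).
by apply: (idealMr _ hJ); apply: NJ.
Qed.

(* Modulo a maximal ideal N, an ideal JJ containing N and not contained in
   N[X] is generated modulo N[X] by a single monic polynomial: this is the
   principal ideal property of (R/N)[X]. *)
Lemma monic_generator N JJ : maximal_ideal N -> is_ideal JJ -> (forall a, N a -> JJ a%:P) ->
  (exists q, JJ q /\ ~ coefs_in N q) ->
  exists f, [/\ f \is monic, JJ f & forall q, JJ q -> ext_gen N f q].
Proof.
move=> hN hJ NJ exq; have [[hNi N1] _] := hN.
have [l [Jl Nl l_min]] := least_lead_exists hNi hJ NJ exq.
have [f [mf Jf sf]] := monic_of_lead hN hJ NJ Jl Nl.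
have least_f : least_lead N JJ f.
  by split=> // [|l' Jl' Nl']; [rewrite (monicP mf) | rewrite sf; apply: l_min].
exists f; split=> // q Jq.
have [k [r [w [_ Nr]]]] := least_lead_div hNi hJ NJ least_f Jq.
rewrite (monicP mf) expr1n scale1r => ->.
by exists r, (w * f); split=> //; exists w.
Qed.

Lemma monic_size_gt1 JJ f : ~ JJ 1 -> JJ f -> f \is monic -> (1 < size f)%N.
Proof.
by move=> J1 Jf mf; rewrite ltnNge; apply/negP => /(monic_size1 mf) f1; apply: J1; rewrite -f1.
Qed.

(* Over a maximal ideal N, a proper ideal JJ containing N and not contained
   in N[X] lies in a maximal ideal, namely N[X] + (pi) for a monic pi of
   least size (an irreducible factor modulo N) with its generator in N[X] + (pi). *)
Lemma maximal_above N JJ : maximal_ideal N -> is_ideal JJ -> ~ JJ 1 ->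
  (forall a, N a -> JJ a%:P) -> (exists q, JJ q /\ ~ coefs_in N q) ->
  exists MM, maximal_ideal MM /\ forall q, JJ q -> MM q.
Proof.
move=> hN hJ J1 NJ exq; have hNp := maximal_prime hN; have [[hNi N1] _] := hN.
have [f [mf Jf Jgen]] := monic_generator hN hJ NJ exq.
have [s [[pi [mpi <- spi fpi]] pi_min]] := least_nat (P := fun s =>
  exists pi, [/\ pi \is monic, size pi = s, (1 < s)%N & ext_gen N pi f])
  (ex_intro _ _ (ex_intro _ f (And4 mf erefl (monic_size_gt1 J1 Jf mf) (ext_gen_self f hNi)))).
exists (ext_gen N pi); split; last by move=> q /Jgen; apply: ext_gen_sub.
apply: maximal_intro; first exact: ext_gen_ideal.
  move/(ext_gen_unit hNp)/(top_at_unique (monic_top hNi N1 mpi)).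
  by case: (size pi) spi => [|[|k]].
move=> LL hL piL L1 q Lq.
have NL : forall a, N a -> LL a%:P.
  by move=> a Na; apply/piL/ideal_addl; [apply: principal_ideal | apply: coefs_inC].
have Lpi : LL pi by apply/piL/ext_gen_self.
have Npi : ~ coefs_in N pi by move=> /(_ (size pi).-1); rewrite -lead_coefE (monicP mpi).
have [mu [mmu Lmu Lgen]] := monic_generator hN hL NL (ex_intro _ pi (conj Lpi Npi)).
have le_pi_mu : (size pi <= size mu)%N.
  apply: pi_min; exists mu; split=> //; first exact: monic_size_gt1 L1 Lmu mmu.
  by apply/Lgen/piL.
have mu_pi : ext_gen N pi mu.
  have /(monic_congr hNp mpi mmu le_pi_mu) Nd := Lgen _ Lpi.
  by exists (mu - pi), pi; split=> //; [exact: principal_gen | rewrite subrK].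
exact: ext_gen_sub hNi mu_pi q (Lgen q Lq).
Qed.

End ModuloMaximal.

Section DeterminantTrick.
Variable R : comNzRingType.
Implicit Types (I N : R -> Prop) (JJ : {poly R} -> Prop) (g h n : {poly R}).

Lemma mul_congr I (x1 x2 y1 y2 : R) : is_ideal I ->
  I (x1 - x2) -> I (y1 - y2) -> I (x1 * y1 - x2 * y2).
Proof.
move=> hI Ix Iy; have -> : x1 * y1 - x2 * y2 = x1 * (y1 - y2) + (x1 - x2) * y2.
  by rewrite mulrBr mulrBl addrA subrK.
by apply: (idealD hI); [apply: idealM | apply: idealMr].
Qed.

Lemma det_congr I m (A B : 'M[R]_m) : is_ideal I ->
  (forall i j, I (A i j - B i j)) -> I (\det A - \det B).
Proof.
move=> hI AB; rewrite /determinant -sumrB; apply: (ideal_sum _ hI) => s _.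
rewrite -mulrBr; apply: (idealM _ hI).
apply: (big_ind2 (fun x y => I (x - y))) => [|x1 x2 y1 y2 | i _]; last exact: AB.
  by rewrite subrr; apply: ideal0.
exact: mul_congr.
Qed.

(* The determinant of the matrix of coefficients of polynomials P_0..P_m of
   size at most m + 1 is an R[X]-combination of them (adjugate formula). *)
Lemma det_rows_ideal JJ m (P : 'I_m.+1 -> {poly R}) : is_ideal JJ ->
  (forall i, JJ (P i)) -> (forall i, size (P i) <= m.+1)%N ->
  JJ (\det (\matrix_(i, j) (P i)`_j))%:P.
Proof.
move=> hJ JP sP; set A := \matrix_(i, j) _.
suff -> : (\det A)%:P = \sum_i \adj A ord0 i *: P i.
  by apply: (ideal_sum _ hJ) => i _; rewrite -mul_polyC; apply: (idealM _ hJ).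
apply/polyP => k; rewrite coefC coef_sum.
case: (ltnP k m.+1) => [lt_km | le_mk]; last first.
  rewrite big1 => [|i _]; last by rewrite coefZ nth_default ?mulr0 // (leq_trans (sP i)).
  by rewrite gtn_eqF // (leq_trans _ le_mk).
have := congr1 (fun B : 'M[R]_m.+1 => B ord0 (Ordinal lt_km)) (mul_adj_mx A); rewrite !mxE => E.
rewrite (_ : (k == 0)%N = (ord0 == Ordinal lt_km)); last by rewrite eq_sym.
by rewrite -mulrb -E; apply: eq_bigr => i _; rewrite coefZ !mxE.
Qed.

(* If 1 = h + n with h in
   JJ and n in N[X], pseudo-division gives c^(k_i) X^i n = r_i + w_i g with
   r_i in N[X] of size < size g; the rows c^(k_i) X^i - r_i lie in JJ, so
   their coefficient matrix has determinant in JJ ∩ R ⊆ N, while modulo N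
   this determinant is a power of c. *)
Lemma det_trick JJ N g : is_ideal JJ -> prime_ideal N -> (forall a, JJ a%:P -> N a) ->
  JJ g -> ~ N (lead_coef g) -> ~ ideal_add JJ (coefs_in N) 1.
Proof.
move=> hJ hNp JN Jg Ng [h [n [Jh Nn E]]].
have [[hN _] _] := hNp; have hNX := coefs_in_ideal hN; set c := lead_coef g in Ng.
have [e sg] : exists e, size g = e.+2.
  case sg: (size g) (lead_out_size hN Ng) => [|[|e]] // _; last by exists e.
  by case: Ng; apply: JN; rewrite /c lead_coefE sg -(size1_polyC _) ?sg.
have red (i : 'I_e.+1) : exists krw : nat * {poly R} * {poly R}, [/\
    (size krw.1.2 <= e.+1)%N, coefs_in N krw.1.2 &
    c ^+ krw.1.1 *: ('X^i * n) = krw.1.2 + krw.2 * g].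
  have Nin : coefs_in N ('X^i * n) by apply: (idealM _ hNX).
  have [k [r [w [sr Nr Ei]]]] := pseudo_div hN (lead_out_size hN Ng) Nin.
  by exists (k, r, w); split=> //; rewrite -ltnS -sg.
have [F HF] := fin_all_exists red.
pose P i := c ^+ (F i).1.1 *: 'X^i - (F i).1.2.
have h_eq : h = 1 - n by rewrite E addrK.
have JP i : JJ (P i).
  have [_ _ Ei] := HF i; have -> : P i = (c ^+ (F i).1.1 *: 'X^i) * h + (F i).2 * g.
    by rewrite h_eq mulrBr mulr1 -scalerAl Ei opprD addrA subrK.
  by apply: (idealD hJ); apply: (idealM _ hJ).
have sP i : (size (P i) <= e.+1)%N.
  have [sr _ _] := HF i; rewrite (leq_trans (size_polyD _ _)) // geq_max size_polyN sr andbT.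
  by rewrite (leq_trans (size_scale_leq _ _)) // size_polyXn.
have NA := JN _ (det_rows_ideal hJ JP sP); set A := \matrix_(i, j) _ in NA.
pose D := diag_mx (\row_i (c ^+ (F i).1.1)).
have ND : N (\det D).
  have -> : \det D = \det A - (\det A - \det D) by rewrite opprB addrC subrK.
  apply: (idealB hN NA); apply: det_congr => // i j.
  rewrite !mxE coefB coefZ coefXn; have [_ Ni _] := HF i.
  have -> : (j == i :> nat) = (i == j) by rewrite eq_sym.
  by rewrite mulr_natr addrAC subrr add0r; apply: (idealN hN).
move: ND; rewrite det_diag (eq_bigr _ (fun i _ => mxE _ _ _ _)) prodrXr.
by move/(prime_expr hNp).
Qed.

End DeterminantTrick.

Section Contraction.
Variable R : comNzRingType.
Implicit Types (N P : R -> Prop) (MM QQ : {poly R} -> Prop) (q x : {poly R}).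

(* A maximal ideal of R[X] is never the extension of its contraction: otherwise
   adjoining X would give a proper ideal. *)
Lemma maximal_not_extended MM : maximal_ideal MM ->
  exists q, MM q /\ ~ coefs_in (contract MM) q.
Proof.
move=> hM; have [[hMi M1] _] := hM; have hP := contract_ideal hMi.
apply: NNPP => noq; have ext q : MM q -> coefs_in (contract MM) q.
  by move=> Mq; apply: NNPP => Pq; apply: noq; exists q.
have : ext_gen (contract MM) 'X 1.
  apply: (maximal_sub (x := 'X) hM (ext_gen_ideal 'X hP)) => [q Mq | | /ext/(_ 1%N)].
  - by apply: ideal_addl; [apply: principal_ideal | apply: ext].
  - exact: ext_gen_self.
  - by rewrite coefX /contract polyC1.
move=> [a [_ [Pa [b ->] E]]]; apply: M1; rewrite -polyC1.
have := congr1 (fun p : {poly R} => p`_0) E.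
by rewrite coef1 eqxx mulr1n coefD coefMX addr0 => ->; apply: Pa.
Qed.

Lemma contract_maximal MM : hilbert_ring R -> maximal_ideal MM -> maximal_ideal (contract MM).
Proof.
move=> hR hM; have [[hMi _] _] := hM; set P := contract MM.
have hP := contract_ideal hMi; have hPp := contract_prime (maximal_prime hM).
have [q [Mq Pq]] := maximal_not_extended hM.
have [j topq] := top_at_exists hP Pq.
have [g [Mg _ lg]] := truncate_top hP hMi (fun a Pa => Pa) Mq topq.
have Pg : ~ P (lead_coef g) by rewrite lg; case: topq.
have [N [hN PN Ng]] := hilbert_avoid hR hPp Pg; have [[hNi _] _] := hN.
apply: (maximal_ext _ hN) => a; split=> [Na | /PN //].
apply: NNPP => Pa; apply: (det_trick hMi (maximal_prime hN) PN Mg Ng).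
apply: (maximal_sub (x := a%:P) hM (ideal_add_ideal hMi (coefs_in_ideal hNi))) => //.
- by move=> p Mp; apply: ideal_addl => //; apply: coefs_in_ideal.
- by apply: ideal_addr => //; apply: coefs_inC.
Qed.

(* Then l is a constant: dividing g by l leaves a
   quotient w in QQ, and comparing degrees modulo P in w l ≡ c^k g shows that
   a smaller element than g would arise from w unless deg l = 0. *)
Lemma least_lead_constant QQ LL g l : prime_ideal QQ -> is_ideal LL ->
  (forall q, QQ q -> LL q) -> least_lead (contract QQ) QQ g ->
  least_lead (contract QQ) LL l -> ~ QQ l -> size l = 1%N.
Proof.
move=> hQ hL QL [Qg Pg g_min] least_l Ql; have [[hQi _] Qmul] := hQ.
set P := contract QQ in Pg g_min least_l *.
have hPp : prime_ideal P := contract_prime hQ; have [[hP _] _] := hPp.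
have PQ a : P a -> QQ a%:P by [].
have PL a : P a -> LL a%:P by move=> Pa; apply/QL/PQ.
have [_ Pl _] := least_l; set c := lead_coef l in Pl.
have Pck k : ~ P (c ^+ k) by move/(prime_expr hPp).
have [k [r [w [_ Pr Eg]]]] := least_lead_div hP hL PL least_l (QL _ Qg).
have Ewl : w * l = c ^+ k *: g - r by rewrite Eg addrAC subrr add0r.
have Qw : QQ w.
  have : QQ (w * l).
    rewrite Ewl -mul_polyC; apply: (idealB hQi); first exact: (idealM _ hQi).
    exact: coefs_in_contract.
  by case/Qmul.
have top_wl : top_at P (w * l) (size g).-1.
  rewrite Ewl; apply: (top_at_addr hP); last exact: (idealN (coefs_in_ideal hP)).
  exact/(top_at_scale hPp (Pck k))/top_at_lead.
have [j top_w] : exists j, top_at P w j.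
  apply: (top_at_exists hP) => Pw; apply: top_wl.1.
  exact: (idealMr _ (coefs_in_ideal hP) Pw).
have top_eq := top_at_unique (top_at_mul hPp top_w (top_at_lead hP Pl)) top_wl.
apply/eqP; rewrite eqn_leq (lead_out_size hP Pl) andbT leqNgt; apply/negP => sl.
have lt_jg : (j.+1 < size g)%N.
  rewrite -(prednK (lead_out_size hP Pg)) ltnS -top_eq -addn1 leq_add2l.
  by rewrite -ltnS prednK ?(ltnW sl).
have [g' [Qg' sg' lg']] := truncate_top hP hQi PQ Qw top_w.
have Pg' : ~ P (lead_coef g') by rewrite lg'; case: top_w.
by have := g_min g' Qg' Pg'; rewrite sg' leqNgt lt_jg.
Qed.

End Contraction.

Section HilbertPolynomial.
Variable R : comNzRingType.
Hypothesis hR : hilbert_ring R.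
Implicit Types (N P : R -> Prop) (MM QQ JJ : {poly R} -> Prop) (q x : {poly R}).

(* Case of a prime QQ = P[X] extended from R: a maximal N above P avoiding a
   top coefficient of x gives the maximal ideal N[X] + (1 + X x). *)
Lemma hilbert_avoid_extended QQ x : prime_ideal QQ ->
  (forall q, QQ q -> coefs_in (contract QQ) q) -> ~ QQ x ->
  exists MM, [/\ maximal_ideal MM, forall q, QQ q -> MM q & ~ MM x].
Proof.
move=> hQ QP Qx; have [[hQi _] _] := hQ; have hPp := contract_prime hQ.
have [[hP _] _] := hPp.
have [j [Pj _]] := top_at_exists hP (fun Px => Qx (coefs_in_contract hQi Px)).
have [N [hN PN Nj]] := hilbert_avoid hR hPp Pj; have [[hNi _] _] := hN.
have hNX := coefs_in_ideal hNi.
have [j' top_x] := top_at_exists hNi (fun Nx : coefs_in N x => Nj (Nx j)).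
set u := 1 + 'X * x.
have top_u : top_at N u j'.+1.
  split=> [|[//|k] lt_k]; rewrite coefD coef1 coefXM /= add0r; first exact: top_x.1.
  exact: top_x.2.
have J1 : ~ ext_gen N u 1.
  by move/(ext_gen_unit (maximal_prime hN))/(top_at_unique top_u).
have NJ a : N a -> ext_gen N u a%:P.
  by move=> Na; apply: ideal_addl; [apply: principal_ideal | apply: coefs_inC].
have [MM [hM JM]] := maximal_above hN (ext_gen_ideal u hNi) J1 NJ
  (ex_intro _ u (conj (ext_gen_self u hNi) (fun Nu : coefs_in N u => top_u.1 (Nu _)))).
have [[hMi M1] _] := hM.
exists MM; split=> // [q Qq | Mx].
  by apply/JM/ideal_addl => [|i]; [apply: principal_ideal | apply/PN/QP].
apply: M1; have -> : 1 = u - 'X * x by rewrite addrK.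
by apply: (idealB hMi); [apply/JM/ext_gen_self | apply: idealM].
Qed.

(* Let P = QQ ∩ R for a prime QQ of R[X] containing g with lead(g) outside P.
   If some constant c outside P lies in QQ + (x), then a maximal ideal N above
   P avoiding c lead(g) makes QQ + N[X] proper (determinant trick); a maximal
   ideal above it contracts to N, hence misses c and therefore x. *)
Lemma hilbert_avoid_const QQ x g c : prime_ideal QQ -> QQ g ->
  ~ contract QQ (lead_coef g) -> ~ contract QQ c -> ideal_add QQ (principal x) c%:P ->
  exists MM, [/\ maximal_ideal MM, forall q, QQ q -> MM q & ~ MM x].
Proof.
move=> hQ Qg Pg Pc [q [_ [Qq [d ->] Ec]]]; have [[hQi _] _] := hQ.
have [[_ _] Pmul] := contract_prime hQ.
have Pgc : ~ contract QQ (lead_coef g * c) by case/Pmul.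
have [N [hN PN Ngc]] := hilbert_avoid hR (contract_prime hQ) Pgc.
have [[hNi _] _] := hN.
have Ng : ~ N (lead_coef g) by move=> Ng; apply: Ngc; apply: (idealMr _ hNi).
have Nc : ~ N c by move=> Nc; apply: Ngc; apply: (idealM _ hNi).
set JJ := ideal_add QQ (coefs_in N).
have hJ : is_ideal JJ := ideal_add_ideal hQi (coefs_in_ideal hNi).
have QJ p : QQ p -> JJ p by apply: ideal_addl; apply: coefs_in_ideal.
have NJ a : N a -> JJ a%:P by move=> Na; apply: ideal_addr => //; apply: coefs_inC.
have J1 := det_trick hQi (maximal_prime hN) PN Qg Ng.
have Ng' : ~ coefs_in N g by move/(_ (size g).-1).
have [MM [hM JM]] := maximal_above hN hJ J1 NJ (ex_intro _ g (conj (QJ _ Qg) Ng')).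
have [[hMi M1] _] := hM.
exists MM; split=> [//| p Qp | Mx]; first exact/JM/QJ.
apply: M1; rewrite -polyC1; apply: (maximal_sub (x := c) hN (contract_ideal hMi)) => //.
- by move=> a /NJ /JM.
- by rewrite /contract Ec; apply: (idealD hMi); [apply/JM/QJ | apply: (idealM _ hMi)].
Qed.

(* Case of a prime QQ not extended from its contraction P: an element l of
   least size in QQ + (x) with leading coefficient c outside P is the
   constant c, which lies outside QQ. *)
Lemma hilbert_avoid_nonextended QQ x : prime_ideal QQ ->
  (exists q, QQ q /\ ~ coefs_in (contract QQ) q) -> ~ QQ x ->
  exists MM, [/\ maximal_ideal MM, forall q, QQ q -> MM q & ~ MM x].
Proof.
move=> hQ exq Qx; have [[hQi _] Qmul] := hQ; set P := contract QQ.
have hPp : prime_ideal P := contract_prime hQ; have [[hP _] _] := hPp.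
have PQ a : P a -> QQ a%:P by [].
have [g least_g] := least_lead_exists hP hQi PQ exq; have [Qg Pg _] := least_g.
set LL := ideal_add QQ (principal x).
have hL : is_ideal LL := ideal_add_ideal hQi (principal_ideal x).
have QL q : QQ q -> LL q by apply: ideal_addl; apply: principal_ideal.
have PL a : P a -> LL a%:P by move=> Pa; apply/QL/PQ.
have [l least_l] := least_lead_exists hP hL PL
  (ex_intro _ g (conj (QL _ Qg) (fun Pg' : coefs_in P g => Pg (Pg' _)))).
have [Ll Pl _] := least_l; set c := lead_coef l in Pl.
have Ql : ~ QQ l.
  move=> Ql; have [k [r [w [_ Pr Ex]]]] :=
    least_lead_div hP hL PL least_l (ideal_addr hQi (principal_gen x)).
  have : QQ ((c ^+ k)%:P * x).
    rewrite mul_polyC Ex; apply: (idealD hQi); first exact: coefs_in_contract.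
    exact: (idealM _ hQi).
  by case/Qmul => // /(prime_expr hPp).
have sl := least_lead_constant hQ hL QL least_g least_l Ql.
apply: (hilbert_avoid_const hQ Qg Pg Pl).
by rewrite /c lead_coefE sl -(size1_polyC _) ?sl.
Qed.

Lemma hilbert_poly : hilbert_ring {poly R}.
Proof.
move=> QQ hQ x; split=> [Qx MM _ QM | allM]; first exact: QM.
apply: NNPP => Qx.
have [MM [hM QM Mx]] : exists MM, [/\ maximal_ideal MM, forall q, QQ q -> MM q & ~ MM x].
  case: (classic (exists q, QQ q /\ ~ coefs_in (contract QQ) q)) => [exq | noq].
    exact: hilbert_avoid_nonextended.
  by apply: hilbert_avoid_extended => // q Qq; apply: NNPP => Pq; apply: noq; exists q.
exact: Mx (allM MM hM QM).
Qed.

End HilbertPolynomial.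

Section PowerStability.
Variable R : comNzRingType.
Implicit Types (I J : R -> Prop) (II JJ MM : {poly R} -> Prop) (f p : {poly R}).

Lemma ideal_mul_ext_gen I J f II JJ : is_ideal I ->
  (forall p, II p -> ext_gen I f p) -> (forall p, JJ p -> ext_gen J f p) ->
  forall p, ideal_mul II JJ p -> ext_gen (ideal_mul I J) f p.
Proof.
move=> hI IIf JJf _ [s [Hs ->]]; rewrite big_seq.
apply: (ideal_sum _ (ext_gen_ideal f (ideal_mul_ideal J hI))) => pr /Hs [].
move=> /IIf [a [_ [Ia [b ->] ->]]] /JJf [a' [_ [Ja' [b' ->] ->]]].
exists (a * a'), ((b * (a' + b' * f) + a * b') * f).
by split; [exact: coefs_in_mul | exists (b * (a' + b' * f) + a * b') | ring].
Qed.

Lemma ideal_pow_ext_gen I f MM : is_ideal I -> (forall p, MM p -> ext_gen I f p) ->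
  forall t p, ideal_pow MM t p -> ext_gen (ideal_pow I t) f p.
Proof.
move=> hI MMf; elim=> [|t IHt] p /=.
  by move=> _; apply: ideal_addl => //; apply: principal_ideal.
by apply: ideal_mul_ext_gen => //; apply: ideal_pow_ideal.
Qed.

Lemma const_ext_gen I f a : is_ideal I -> f \is monic -> (1 < size f)%N ->
  ext_gen I f a%:P -> I a.
Proof.
move=> hI mf sf [n [_ [In [b ->] E]]].
have [r [w [sr Ir En]]] := monic_div hI mf In.
have Eaf : a%:P - r = (b + w) * f by rewrite E En; ring.
have small : (size (a%:P - r)%R < size f)%N.
  rewrite (leq_ltn_trans (size_polyD _ _)) // gtn_max size_polyN sr andbT.
  exact: leq_ltn_trans (size_polyC_leq1 a) sf.
have bw0 : b + w = 0.
  apply/eqP; apply: contraTT small => nz; rewrite Eaf size_Mmonic // -leqNgt.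
  case: (size (b + w)) (size_poly_gt0 (b + w)) => [|s]; rewrite nz // => _.
  by rewrite addSn leq_addl.
have -> : a = (a%:P - r)`_0 + r`_0 by rewrite coefB coefC subrK.
by rewrite Eaf bw0 mul0r coef0 add0r.
Qed.

Lemma pow_contract_sub MM t a : ideal_pow (contract MM) t a -> contract (ideal_pow MM t) a.
Proof.
elim: t a => [|t IHt] a //= [s [Hs ->]].
exists [seq (pr.1%:P, pr.2%:P) | pr <- s]; split.
  by move=> _ /mapP [pr prs ->] /=; have [H1 H2] := Hs pr prs; split=> //; apply: IHt.
by rewrite big_map rmorph_sum; apply: eq_bigr => pr _; rewrite /= polyCM.
Qed.

(* A maximal ideal MM of R[X] whose contraction m is maximal is power stable:
   MM = m[X] + (f) for a monic f of positive degree, so MM^t ⊆ m^t[X] + (f),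
   and constants in m^t[X] + (f) lie in m^t. *)
Lemma power_stable MM : maximal_ideal MM -> maximal_ideal (contract MM) ->
  forall t a, contract (ideal_pow MM t) a <-> ideal_pow (contract MM) t a.
Proof.
move=> hM hm t a; split; last exact: pow_contract_sub.
have [[hMi M1] _] := hM; have [[hmi _] _] := hm.
have [f [mf Mf Mgen]] :=
  monic_generator hm hMi (fun a Pa => Pa) (maximal_not_extended hM).
move/(ideal_pow_ext_gen hmi Mgen).
exact: const_ext_gen (ideal_pow_ideal t hmi) mf (monic_size_gt1 M1 Mf mf).
Qed.

End PowerStability.

(* Fields are Hilbert rings, since there every prime ideal is maximal. *)
Lemma field_hilbert (F : fieldType) : hilbert_ring F.
Proof.
move=> P hP x; split; first by move=> Px M _ PM; apply: PM.
have [[hPi P1] _] := hP; apply=> //.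
apply: maximal_intro => // J hJ _ J1 y Jy.
case: (eqVneq y 0) => [-> | y0]; first exact: ideal0.
by case: J1; rewrite -(mulVf y0); apply: idealM.
Qed.

Lemma mpoly_hilbert (K : fieldType) n : hilbert_ring (mpoly K n).
Proof. by elim: n => [|n IHn] /=; [exact: field_hilbert | exact: hilbert_poly]. Qed.

Theorem mainTheorem14 :
  (forall (R : idomainType), hilbert_ring R ->
     forall M : {poly R} -> Prop, maximal_ideal M ->
     forall t : nat, (1 <= t)%N ->
     forall r : R, contract (ideal_pow M t) r <-> ideal_pow (contract M) t r)
  /\
  (forall (K : fieldType) (n : nat),
     forall M : mpoly K n.+1 -> Prop, maximal_ideal M ->
     forall t : nat, (1 <= t)%N ->
     forall r : mpoly K n,
       contract (ideal_pow M t) r <-> ideal_pow (contract M) t r).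
Proof.
have hilbert_stable (R : comNzRingType) (M : {poly R} -> Prop) : hilbert_ring R ->
    maximal_ideal M -> forall t r, contract (ideal_pow M t) r <-> ideal_pow (contract M) t r.
  by move=> hR hM; apply: power_stable => //; apply: contract_maximal.
split=> [R hR M hM t _ | K n M hM t _]; first exact: hilbert_stable.
exact (hilbert_stable (mpoly K n) M (@mpoly_hilbert K n) hM t).
Qed.
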